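(* Let $\Lambda\subset[0,+\infty)$ be a decreasing gap asymptotically dense set and let $f:\mathbb{R}\to[0,+\infty)$ be continuous. If $x$ is an interior point of $C(f,\Lambda)$, then \[ \mu\big([x,+\infty)\cap D(f,\Lambda)\big)=0 . \]
   Context: $\mu$ denotes one-dimensional Lebesgue measure. For a discrete set $\Lambda\subset[0,\infty)$ and $f:\mathbb{R}\to[0,+\infty)$, put $s(x)=\sum_{\lambda\in\Lambda}f(x+\lambda)$, $C(f,\Lambda)=\{x: s(x)<\infty\}$ and $D(f,\Lambda)=\{x: s(x)=\infty\}$. An unbounded infinite discrete set $\Lambda=\{\lambda_1<\lambda_2<\cdots\}$ is a decreasing gap asymptotically dense set if the gaps $d_n=\lambda_n-\lambda_{n-1}$ tend to $0$ monotone decreasingly. *)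

From HB Require Import structures.
From mathcomp Require Import all_boot all_order all_algebra.
From mathcomp Require Import all_classical all_reals all_analysis.
Set Implicit Arguments. Unset Strict Implicit. Unset Printing Implicit Defensive.
Import Order.TTheory GRing.Theory Num.Theory.
Import numFieldNormedType.Exports.
Local Open Scope classical_set_scope.
Local Open Scope ring_scope.

(* Lambda = {lam 0 < lam 1 < ...} is encoded by its strictly increasing
   enumeration lam : nat -> R. *)
Definition decreasing_gap_asymptotically_dense {R : realType} (lam : nat -> R) : Prop :=
  [/\ 0 <= lam 0%N,
      (forall n, lam n < lam n.+1),
      (forall M : R, exists n, M < lam n),
      (forall n, lam n.+2 - lam n.+1 <= lam n.+1 - lam n) &
      ((fun n => lam n.+1 - lam n) @ \oo --> (0 : R))].

Definition sfun {R : realType} (f : R -> R) (lam : nat -> R) (x : R) : \bar R :=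
  (\sum_(0 <= n <oo) (f (x + lam n))%:E)%E.

Definition Cset {R : realType} (f : R -> R) (lam : nat -> R) : set R :=
  [set x | (sfun f lam x < +oo)%E].

Definition Dset {R : realType} (f : R -> R) (lam : nat -> R) : set R :=
  [set x | sfun f lam x = +oo%E].

From Pilot Require Import Defs.
From HB Require Import structures.
From mathcomp Require Import all_boot all_order all_algebra.
From mathcomp Require Import all_classical all_reals all_analysis.
From mathcomp Require Import measurable_realfun lra.
Import Order.TTheory GRing.Theory Num.Theory.
Import numFieldNormedType.Exports.
Local Open Scope classical_set_scope.
Local Open Scope ring_scope.

(* Near an interior point x of C(f, Lambda), Baire's theorem makes the partial
   sums of s uniformly bounded on a small interval [a, a + l] to the left of x,
   so the integral of s over it, which is the sum over lam in Lambda of the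
   integrals of f over the windows [a + lam, a + lam + l], is finite.  As the
   gaps decrease, rounding lam + (b - a) down to Lambda is injective, and as
   they tend to 0, each window at b + lam is eventually covered by two windows
   at points a + lam'.  Hence s is integrable on [b, b + l] for every b >= a,
   so D(f, Lambda) is null there, and countably many such intervals cover
   [x, +oo). *)

Section increasing_unbounded_sequence.
Context {R : realType} {lam : nat -> R}.
Hypotheses (lam_incr : forall n, lam n < lam n.+1)
  (lam_unbounded : forall M : R, exists n, M < lam n).

Lemma lam_le {i j} : (i <= j)%N -> lam i <= lam j.
Proof. by rewrite ((increasing_seqP lam).1 lam_incr). Qed.

Lemma exists_lam_bracket t : lam 0%N <= t -> exists m, lam m <= t < lam m.+1.
Proof.
move=> t0; have [K tK] := lam_unbounded t.
elim: K tK => [|K IH] tK; first by move: (lt_le_trans tK t0); rewrite ltxx.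
by have [/IH//|Kt] := ltP t (lam K); exists K; rewrite Kt.
Qed.

Hypothesis gap_noninc : forall n, lam n.+2 - lam n.+1 <= lam n.+1 - lam n.

Lemma gap_le {i j} : (i <= j)%N -> lam j.+1 - lam j <= lam i.+1 - lam i.
Proof. exact: (nonincreasing_seqP (fun n => lam n.+1 - lam n)).1. Qed.

(* If lam n + c and lam n' + c, with n < n', fell in the same gap
   [lam m, lam m.+1), then lam n' - lam n < gap m <= gap n, since m >= n. *)
Lemma exists_inj_floor_shift (c : R) : 0 <= c ->
  exists phi : nat -> nat, [/\ injective phi, forall n, (n <= phi n)%N &
    forall n, lam (phi n) <= lam n + c < lam (phi n).+1].
Proof.
move=> c0.
have [phi bracket] : {phi : nat -> nat &
    forall n, lam (phi n) <= lam n + c < lam (phi n).+1}.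
  apply: (@choice _ _ (fun n m => lam m <= lam n + c < lam m.+1)) => n.
  by apply: exists_lam_bracket; have := lam_le (leq0n n); lra.
have le_phi n : (n <= phi n)%N.
  rewrite leqNgt; apply/negP => /lam_le; have /andP[_] := bracket n; lra.
have neq_phi n n' : (n < n')%N -> phi n <> phi n'.
  move=> lt_nn' e; have := gap_le (le_phi n); have := lam_le lt_nn'.
  have /andP[+ _] := bracket n; move: (bracket n'); rewrite -e => /andP[_].
  lra.
exists phi; split=> // n n' e.
by have [/neq_phi/(_ e)|/neq_phi/(_ (esym e))|] := ltngtP n n'.
Qed.

End increasing_unbounded_sequence.

Section uniform_boundedness.
Context {R : realType} {g : nat -> R -> R} {p q : R}.
Hypothesis g_cont : forall n, continuous (g n).

Lemma closed_uniformly_bounded (M : R) :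
  closed ([set` `[p, q]] `&` [set y | forall n, g n y <= M]).
Proof.
apply: closedI; first exact: interval_closed.
rewrite [X in closed X](_ : _ = \bigcap_n (g n @^-1` [set r | r <= M])).
  apply: closed_bigI => n _.
  exact: preimage_closed (fun y _ => g_cont n y) (@closed_le R M).
by apply/seteqP; split=> y /= gy n; [move=> _; exact: gy | exact: gy n I].
Qed.

Lemma baire_uniform_bound : p < q ->
  (forall y, p < y < q -> exists M, forall n, g n y <= M) ->
  exists a b M, [/\ p <= a, a < b, b <= q &
    forall n y, a <= y <= b -> g n y <= M].
Proof.
move=> pq g_bounded.
pose A (k : nat) := [set` `[p, q]] `&` [set y | forall n, g n y <= k%:R].
suff: exists k (U : set R), [/\ U !=set0, open U & U `<=` A k].
  move=> [k [U [[z Uz] oU UA]]].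
  have /nbhs_ballP[e /= e0 zeU] := open_nbhs_nbhs (conj oU Uz).
  have ball_A y : z - e / 2 <= y <= z + e / 2 -> A k y.
    by move=> zy; apply/UA/zeU; rewrite ball_itv /= in_itv /=; lra.
  have ball_pq y : z - e / 2 <= y <= z + e / 2 -> p <= y <= q.
    by move=> /ball_A [/=]; rewrite in_itv.
  have /andP[pa _] : p <= z - e / 2 <= q by apply: ball_pq; lra.
  have /andP[_ bq] : p <= z + e / 2 <= q by apply: ball_pq; lra.
  exists (z - e / 2), (z + e / 2), k%:R; split => //; first lra.
  by move=> n y /ball_A [_].
apply: contrapT => noO.
have dense_notA k : open (~` A k) /\ dense (~` A k).
  split; first by rewrite openC; exact: closed_uniformly_bounded.
  move=> O O0 oO; apply: contrapT => OnA; apply: noO; exists k, O; split => //.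
  by move=> y Oy; apply: contrapT => nAy; apply: OnA; exists y.
have [|z [/= + nAz]] := Baire dense_notA _ (itv_open p q).
  by exists ((p + q) / 2); rewrite /= in_itv /=; apply/andP; split; lra.
rewrite in_itv /= => zpq; have [M gM] := g_bounded z zpq.
apply: (nAz (Num.truncn M).+1 I); split; first by rewrite /= in_itv /=; lra.
by move=> n; rewrite (le_trans (gM n)) // ltW // truncnS_gt.
Qed.

End uniform_boundedness.

Lemma nneseries_inj_le {R : realType} {u : nat -> \bar R} {phi : nat -> nat} :
  (forall n, (0 <= u n)%E) -> injective phi ->
  (\sum_(n <oo) u (phi n) <= \sum_(n <oo) u n)%E.
Proof.
move=> u0 phi_inj; rewrite !nneseries_esumT //.
rewrite -(esum_image setT phi u); last by move=> a b _ _; exact: phi_inj.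
apply: ge_ereal_sup => _ [X [finX XI] <-].
by apply: esum_ge; exists X.
Qed.

Lemma ge0_integral_setU_le d (T : measurableType d) (R : realType)
    (mu : {measure set T -> \bar R}) (A B : set T) (h : T -> \bar R) :
  measurable A -> measurable B -> measurable_fun (A `|` B) h ->
  (forall t, (A `|` B) t -> 0 <= h t)%E ->
  (\int[mu]_(t in A `|` B) h t <= \int[mu]_(t in A) h t + \int[mu]_(t in B) h t)%E.
Proof.
move=> mA mB mh h0; have mBA : measurable (B `\` A) by exact: measurableD.
have ABA : A `|` B = A `|` (B `\` A) by rewrite setDE setUIr setUv setIT.
rewrite [in X in (X <= _)%E]ABA ge0_integral_setU //; first last.
- by rewrite disj_set2E setDIK.
- by rewrite -ABA.
- by rewrite -ABA.
rewrite leeD2l //; apply: ge0_subset_integral => //.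
  by apply: measurable_funS mh => //; exact: measurableU.
by move=> t Bt; apply: h0; right.
Qed.

Lemma ge0_integral_fin_pinfty_null d (T : measurableType d) (R : realType)
    (mu : {measure set T -> \bar R}) (W : set T) (h : T -> \bar R) :
  measurable W -> measurable_fun W h -> (forall t, 0 <= h t)%E ->
  (\int[mu]_(t in W) h t < +oo)%E ->
  mu (W `&` [set t | h t = +oo%E]) = 0%E.
Proof.
move=> mW mh h0 h_fin; apply/eqP; apply: contraTT h_fin => muE0.
have mE : measurable (W `&` [set t | h t = +oo%E]).
  exact: mh mW [set +oo%E] (emeasurable_set1 _).
rewrite -leNgt; apply: le_trans
  (ge0_subset_integral _ mE mW mh (fun t _ => h0 t) (@subIsetl _ _ _)).
rewrite (eq_integral (cst +oo%E)); last by move=> t; rewrite inE => -[_ ->].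
by rewrite integral_cst // gt0_mulye // lt0e muE0 measure_ge0.
Qed.

Lemma halfline_null_of_windows (R : realType) (D : set R) (x l : R) :
  0 < l -> measurable D ->
  (forall y, x <= y -> lebesgue_measure (`[y, y + l] `&` D) = 0%E) ->
  lebesgue_measure ([set y | x <= y] `&` D) = 0%E.
Proof.
move=> l0 mD null_window.
pose E i := `[x + i%:R * l, x + i%:R * l + l] `&` D.
have mE i : measurable (E i) by apply: measurableI => //; exact: measurable_itv.
have cover : [set y | x <= y] `&` D `<=` \bigcup_i E i.
  move=> y [/= xy Dy]; pose q := (y - x) / l.
  have q0 : 0 <= q by rewrite divr_ge0 ?subr_ge0 // ltW.
  have qE : q * l = y - x by rewrite divfK // gt_eqF.
  exists (Num.truncn q) => //; split => //; rewrite /= in_itv /=.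
  have : (Num.truncn q)%:R * l <= q * l by rewrite ler_pM2r // truncn_le.
  have : q * l < (Num.truncn q).+1%:R * l by rewrite ltr_pM2r // truncnS_gt.
  by rewrite -natr1 mulrDl mul1r; lra.
have mH : measurable ([set y | x <= y] `&` D).
  by apply: measurableI => //; apply: closed_measurable; exact: closed_ge.
apply/eqP; rewrite eq_le measure_ge0 andbT.
apply: (le_trans (measure_sigma_subadditive lebesgue_measure mE mH cover)).
rewrite eseries0 // => i _ _; apply: null_window.
by have := mulr_ge0 (ler0n R i) (ltW l0); lra.
Qed.

Lemma measurable_EFin_continuous (R : realType) (g : R -> R) (D : set R) :
  continuous g -> measurable_fun D (EFin \o g).
Proof.
move=> g_cont; apply/measurable_EFinP.
exact: measurable_funS (continuous_measurable_fun g_cont).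
Qed.

Definition window {R : realType} (f : R -> R) (l p : R) : \bar R :=
  (\int[lebesgue_measure]_(y in `[p, (p + l)%R]) (f y)%:E)%E.

Section sfun_windows.
Context {R : realType} {f : R -> R} {lam : nat -> R}.
Hypotheses (f_ge0 : forall y, 0 <= f y) (f_cont : continuous f).
Local Notation mu := (@lebesgue_measure R).
Local Notation s := (Defs.sfun f lam).

Lemma continuous_f_shift (c : R) : continuous (fun y => f (y + c)).
Proof.
move=> y; apply: (continuous_comp (f := fun y => y + c)); last exact: f_cont.
by apply: cvgD; [exact: cvg_id | exact: cvg_cst].
Qed.

Lemma window_ge0 l p : (0 <= window f l p)%E.
Proof. by apply: integral_ge0 => y _; rewrite lee_fin. Qed.

Lemma window_lt_pinfty l p : (window f l p < +oo)%E.
Proof.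
have : mu.-integrable `[p, p + l] (EFin \o f).
  apply: continuous_compact_integrable; first exact: segment_compact.
  exact: continuous_subspaceT.
by move=> /integrable_fin_num => /(_ (measurable_itv _)) /fin_numPlt/andP[].
Qed.

Lemma window_le_cover l p u v : u <= p -> p <= v -> v <= u + l ->
  (window f l p <= window f l u + window f l v)%E.
Proof.
move=> up pv vul; rewrite /window.
set A := [set` `[u, (u + l)%R]]; set B := [set` `[v, (v + l)%R]].
have [mA mB] : measurable A /\ measurable B by split; exact: measurable_itv.
apply: (@le_trans _ _ (\int[mu]_(y in A `|` B) (f y)%:E)%E).
  apply: ge0_subset_integral => //; first exact: measurableU.
  - exact: measurable_EFin_continuous.
  - by move=> y _; rewrite lee_fin.
  move=> y /=; rewrite !in_itv /= => /andP[py ypl].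
  have [yu|yu] := leP y (u + l); [left|right];
    by rewrite /A /B /= in_itv /=; lra.
apply: ge0_integral_setU_le => //; first exact: measurable_EFin_continuous.
by move=> y _; rewrite lee_fin.
Qed.

Lemma integral_itv_shift (u v t : R) : u <= v ->
  (\int[mu]_(y in `[u, v]) (f (y + t))%:E =
   \int[mu]_(y in `[(u + t)%R, (v + t)%R]) (f y)%:E)%E.
Proof.
move=> uv.
have dF : derive1 (fun y : R => y + t) = cst 1.
  by apply/funext => y; rewrite derive1E deriveD // derive_id derive_cst addr0.
have := @integration_by_substitution_increasing R (fun y => y + t) f u v uv.
rewrite dF /= => ->.
- by apply: eq_integral => y _; rewrite /= mulr1.
- by move=> y z _ _; rewrite ltrD2r.
- by move=> y _; exact: cst_continuous.
- exact: is_cvg_cst.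
- exact: is_cvg_cst.
- split.
  + by move=> y _; apply: derivableD => //; exact: derivable_id.
  + by apply: cvg_at_right_filter; apply: continuousD => //; exact: cvg_cst.
  + by apply: cvg_at_left_filter; apply: continuousD => //; exact: cvg_cst.
- exact: continuous_subspaceT.
Qed.

Lemma sfun_ge0 y : (0 <= s y)%E.
Proof. by apply: nneseries_ge0 => n _ _; rewrite lee_fin. Qed.

Lemma measurable_sfun (D : set R) : measurable_fun D s.
Proof.
apply: ge0_emeasurable_sum => [n y _ _|n _]; first by rewrite lee_fin.
exact: measurable_EFin_continuous (continuous_f_shift _).
Qed.

Lemma measurable_Dset : measurable (Dset f lam).
Proof.
by rewrite -[Dset f lam]setTI; exact: measurable_sfun measurableT _ (emeasurable_set1 _).
Qed.

Lemma integral_sfun_window u l : 0 <= l ->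
  (\int[mu]_(y in `[u, (u + l)%R]) s y =
   \sum_(n <oo) window f l (u + lam n))%E.
Proof.
move=> l0; rewrite /Defs.sfun integral_nneseries //.
- by apply: eq_eseriesr => n _; rewrite integral_itv_shift ?lerDl // addrAC.
- by move=> n; exact: measurable_EFin_continuous (continuous_f_shift _).
- by move=> n y _; rewrite lee_fin.
Qed.

Lemma partial_sum_le_sfun y n :
  ((\sum_(i < n) f (y + lam i))%:E <= s y)%E.
Proof.
rewrite /Defs.sfun -sumEFin.
have := @nneseries_lim_ge R (fun i => (f (y + lam i))%:E) xpredT 0%N n.
by rewrite big_mkord; apply => i _ _; rewrite lee_fin.
Qed.

Lemma sfun_le y (M : R) : (forall n, \sum_(i < n) f (y + lam i) <= M) ->
  (s y <= M%:E)%E.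
Proof.
move=> sM; apply: lime_le; first by apply: is_cvg_nneseries => i _ _; rewrite lee_fin.
by apply: nearW => n; rewrite big_mkord sumEFin lee_fin.
Qed.

Lemma continuous_partial_sum n : continuous (fun y => \sum_(i < n) f (y + lam i)).
Proof.
elim: n => [|n IH] y.
  under eq_fun do rewrite big_ord0; exact: cvg_cst.
under eq_fun do rewrite big_ord_recr /=.
by apply: cvgD; [exact: IH | exact: continuous_f_shift].
Qed.

Lemma integral_sfun_fin_left_of_interior x : interior (Cset f lam) x ->
  exists a l, [/\ 0 < l, a + l <= x &
    (\int[mu]_(y in `[a, (a + l)%R]) s y < +oo)%E].
Proof.
move=> /nbhs_ballP[d /= d0 xdC].
have xdx : x - d < x by lra.
have bounded y : x - d < y < x ->
    exists M, forall n, \sum_(i < n) f (y + lam i) <= M.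
  move=> yx; have : Cset f lam y by apply: xdC; rewrite ball_itv /= in_itv /=; lra.
  rewrite /Cset /= => sy; exists (fine (s y)) => n.
  by rewrite -lee_fin fineK ?ge0_fin_numE ?sfun_ge0 // partial_sum_le_sfun.
have [a [b [M [_ ab bx sM]]]] :=
  baire_uniform_bound continuous_partial_sum xdx bounded.
exists a, (b - a); rewrite subrKC; split; [lra | lra |].
apply: (@le_lt_trans _ _ (\int[mu]_(y in `[a, b]) (cst M%:E) y)%E).
  apply: (ge0_le_integral mu (measurable_itv _)).
  - by move=> y _; exact: sfun_ge0.
  - exact: measurable_sfun.
  - exact: measurable_cst.
  - by move=> y; rewrite /= in_itv /= => aby; apply: sfun_le => n; exact: sM.
rewrite integral_cst /=; last exact: measurable_itv.
by rewrite lebesgue_measure_itv /= lte_fin ab -EFinD -EFinM ltry.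
Qed.

Hypotheses (lam_incr : forall n, lam n < lam n.+1)
  (lam_unbounded : forall M : R, exists n, M < lam n)
  (gap_noninc : forall n, lam n.+2 - lam n.+1 <= lam n.+1 - lam n)
  (gap_cvg : (fun n => lam n.+1 - lam n) @ \oo --> (0 : R)).

(* Once the gaps are at most l, the window at b + lam n is covered by the
   windows at a + lam m and a + lam m.+1, where lam m is the point of Lambda
   just below lam n + (b - a); n |-> m is injective, so the tail of the shifted
   series is bounded by twice the original one. *)
Lemma window_series_shift l a b : 0 < l -> a <= b ->
  (\sum_(n <oo) window f l (a + lam n) < +oo)%E ->
  (\sum_(n <oo) window f l (b + lam n) < +oo)%E.
Proof.
move=> l0 ab S; pose u n := window f l (a + lam n).
have u0 n : (0 <= u n)%E by exact: window_ge0.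
have [N _ gapN] : \forall n \near \oo, lam n.+1 - lam n <= l.
  apply: filterS (cvgr_dist_le _ _ gap_cvg _ l0) => n /=.
  by rewrite sub0r normrN => /(le_trans (ler_norm _)).
have ba0 : 0 <= b - a by rewrite subr_ge0.
have [phi [phi_inj le_phi bracket]] :=
  exists_inj_floor_shift lam_incr lam_unbounded gap_noninc _ ba0.
pose psi n := phi (n + N)%N.
have psi_inj : injective psi by move=> n n' /phi_inj/addIn.
have cover n : (window f l (b + lam (n + N)) <= u (psi n) + u (psi n).+1)%E.
  have /andP[lo hi] := bracket (n + N)%N.
  have := gapN _ (leq_trans (leq_addl n N) (le_phi (n + N)%N)).
  by rewrite /psi => gap; apply: window_le_cover; lra.
rewrite (nneseries_split 0 N) ?add0n; last by move=> n _; exact: window_ge0.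
apply: lte_add_pinfty; first by apply: lte_sum_pinfty => n _; exact: window_lt_pinfty.
rewrite -nneseries_addn; last by move=> n; exact: window_ge0.
apply: (@le_lt_trans _ _ (\sum_(n <oo) (u (psi n) + u (psi n).+1))%E).
  by apply: lee_nneseries => n *; [exact: window_ge0 | exact: cover].
rewrite nneseriesD //; apply: lte_add_pinfty.
  exact: le_lt_trans (nneseries_inj_le u0 psi_inj) S.
exact: le_lt_trans (nneseries_inj_le u0 (inj_comp succn_inj psi_inj)) S.
Qed.

End sfun_windows.

Theorem theorem3p4 (R : realType) (lam : nat -> R) (f : R -> R) (x : R) :
  decreasing_gap_asymptotically_dense lam ->
  (forall y, 0 <= f y) ->
  continuous f ->
  interior (Cset f lam) x ->
  (@lebesgue_measure R ([set y : R | (x <= y)%R] `&` Dset f lam) = 0)%E.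
Proof.
move=> [_ lam_incr lam_unbounded gap_noninc gap_cvg] f_ge0 f_cont x_int.
have [a [l [l0 alx a_fin]]] := integral_sfun_fin_left_of_interior f_ge0 f_cont _ x_int.
apply: halfline_null_of_windows (l0) (measurable_Dset f_ge0 f_cont) _ => y xy.
have ay : a <= y by lra.
apply: ge0_integral_fin_pinfty_null.
- exact: measurable_itv.
- exact: measurable_sfun.
- exact: sfun_ge0.
rewrite integral_sfun_window ?ltW //.
apply: (window_series_shift f_ge0 f_cont lam_incr lam_unbounded gap_noninc
  gap_cvg l a y l0 ay).
by rewrite -integral_sfun_window ?ltW.
Qed.
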